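(* Let $f:\mathbb{R}^d\to\mathbb{R}$ be differentiable with $f^*:=\inf_\theta f(\theta)>-\infty$ and $\delta(\theta):=f(\theta)-f^*$. Let $\xi\in(-\infty,1/2]$ and $L_0,L_1\ge0$ (not both zero). Suppose $f$ satisfies N\L{} with coefficient $C(\cdot)$ and degree $\xi$, and NS with a function $\beta(\cdot)$ satisfying $\beta(\theta)\le L_0\frac{\|\nabla f(\theta)\|_2^2}{\delta(\theta)^{2-2\xi}}+L_1\|\nabla f(\theta)\|_2$ whenever $\delta(\theta)>0$. Run GNGD $\theta_{t+1}=\theta_t-\frac{\nabla f(\theta_t)}{\beta(\theta_t)}$ from $\theta_1$, assume $\delta(\theta_t)>0$ and $\nabla f(\theta_t)\neq0$ for all $t$, and assume $C:=\inf_{t\ge1}C(\theta_t)>0$. Let $a:=\frac{1}{2}\Big(L_0+\frac{L_1\,\delta(\theta_1)^{1-\xi}}{C}\Big)^{-1}$. Then $\delta(\theta_{t+1})\le\delta(\theta_t)$ for all $t$, and: (i) if $\xi<1/2$, then for all $t\ge1$, $\delta(\theta_t)\le\big[\delta(\theta_1)^{-(1-2\xi)}+(1-2\xi)\,a\,(t-1)\big]^{-\frac{1}{1-2\xi}}$; (ii) if $\xi=1/2$, then for all $t\ge1$, $\delta(\theta_t)\le\exp\Big\{-\frac{C\,(t-1)}{2\,(L_0C+L_1\delta(\theta_1)^{1/2})}\Big\}\,\delta(\theta_1)$.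
   Context: Non-uniform smoothness (NS): a differentiable $f:\mathbb{R}^d\to\mathbb{R}$ satisfies NS with a function $\beta:\mathbb{R}^d\to(0,\infty)$ if for all $\theta,\theta'\in\mathbb{R}^d$, $\big|f(\theta')-f(\theta)-\langle\nabla f(\theta),\theta'-\theta\rangle\big|\le\frac{\beta(\theta)}{2}\|\theta'-\theta\|_2^2$. Non-uniform \L{}ojasiewicz (N\L{}) inequality: $f$ satisfies N\L{} with coefficient $C:\mathbb{R}^d\to(0,\infty)$ and degree $\xi\in(-\infty,1]$ if $\|\nabla f(\theta)\|_2\ge C(\theta)\,|f(\theta)-f^*|^{1-\xi}$ for all $\theta$, where $f^*=\inf_\theta f(\theta)$. *)

From HB Require Import structures.
From mathcomp Require Import all_boot all_order all_algebra.
From mathcomp Require Import all_classical all_reals all_analysis.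
Set Implicit Arguments. Unset Strict Implicit. Unset Printing Implicit Defensive.
Import Order.TTheory GRing.Theory Num.Theory.
Import numFieldNormedType.Exports.
Local Open Scope classical_set_scope.
Local Open Scope ring_scope.

Definition dotv (R : realType) (d : nat) (u v : 'rV[R]_d) : R :=
  \sum_(i < d) u ord0 i * v ord0 i.
Definition norm2 (R : realType) (d : nat) (u : 'rV[R]_d) : R :=
  Num.sqrt (dotv u u).

(* Gradient: the row vector of partial derivatives (directional derivatives
   along the standard basis vectors). *)
Definition grad (R : realType) (d : nat) (f : 'rV[R]_d -> R) (x : 'rV[R]_d)
  : 'rV[R]_d := \row_(i < d) ('D_(delta_mx ord0 i) f x).

Definition fstar (R : realType) (d : nat) (f : 'rV[R]_d -> R) : R := inf (range f).

Definition NS (R : realType) (d : nat) (f : 'rV[R]_d -> R) (beta : 'rV[R]_d -> R) : Prop :=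
  (forall th, 0 < beta th) /\
  forall th th' : 'rV[R]_d,
    `| f th' - f th - dotv (grad f th) (th' - th) | <= beta th / 2 * norm2 (th' - th) ^+ 2.

Definition NL (R : realType) (d : nat) (f : 'rV[R]_d -> R) (C : 'rV[R]_d -> R) (xi : R) : Prop :=
  xi <= 1 /\ (forall th, 0 < C th) /\
  forall th, C th * (`| f th - fstar f | `^ (1 - xi)) <= norm2 (grad f th).

From HB Require Import structures.
From mathcomp Require Import all_boot all_order all_algebra.
From mathcomp Require Import all_classical all_reals all_analysis.
From mathcomp Require Import ring lra.
Import Order.TTheory GRing.Theory Num.Theory.
Import numFieldNormedType.Exports.
Local Open Scope classical_set_scope.
Local Open Scope ring_scope.
Set Implicit Arguments. Unset Strict Implicit.

(* 1. Descent: NS at theta_t turns one GNGD step into the decrease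
      delta_{t+1} <= delta_t - |grad f(theta_t)|^2 / (2 beta(theta_t)),
      so delta_t = f(theta_t) - f^* is nonincreasing.
   2. Sufficient decrease: bounding beta by L0 |grad|^2/delta^(2-2xi) + L1 |grad|
      and |grad| from below by Cinf delta^(1-xi) (NL), with delta_t <= delta_1,
      gives delta_{t+1} <= delta_t - a delta_t^(2-2xi).
   3. Scalar recursions: u_{k+1} <= u_k - c u_k^(1+p) with p > 0 forces
      u_k^(-p) >= u_0^(-p) + p c k (case xi < 1/2, p = 1 - 2 xi), and
      u_{k+1} <= u_k - c u_k forces u_k <= exp(-c k) u_0 (case xi = 1/2).
   The theorem applies 3 to the sequence delta_{k+1} given by 2. *)

Section EuclideanGeometry.
Variables (R : realType) (d : nat).
Implicit Types (u v : 'rV[R]_d) (c : R).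

Lemma dotvZr u v c : dotv u (c *: v) = c * dotv u v.
Proof. rewrite /dotv mulr_sumr; apply: eq_bigr => i _; rewrite mxE; ring. Qed.

Lemma dotvZZ u c : dotv (c *: u) (c *: u) = c ^+ 2 * dotv u u.
Proof. rewrite /dotv mulr_sumr; apply: eq_bigr => i _; rewrite !mxE; ring. Qed.

Lemma dotv_ge0 u : 0 <= dotv u u.
Proof. by apply: sumr_ge0 => i _; rewrite -expr2 sqr_ge0. Qed.

Lemma norm2_sqr u : norm2 u ^+ 2 = dotv u u.
Proof. by rewrite /norm2 sqr_sqrtr // dotv_ge0. Qed.

Lemma ns_gradient_step (f : 'rV[R]_d -> R) (b : R) th th' :
  0 < b ->
  `| f th' - f th - dotv (grad f th) (th' - th) | <= b / 2 * norm2 (th' - th) ^+ 2 ->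
  th' = th - b^-1 *: grad f th ->
  f th' <= f th - norm2 (grad f th) ^+ 2 / (2 * b).
Proof.
move=> b_gt0 + th'E.
have -> : th' - th = (- b^-1) *: grad f th by rewrite th'E scaleNr addrAC subrr add0r.
rewrite dotvZr !norm2_sqr dotvZZ.
set D := dotv _ _ => /(le_trans (ler_norm _)) bound.
have -> : D / (2 * b) = - (- b^-1 * D) - b / 2 * ((- b^-1) ^+ 2 * D).
  by field; rewrite gt_eqF.
lra.
Qed.

End EuclideanGeometry.

Lemma nonneg_comb_gt0 (R : realFieldType) (L0 L1 w : R) :
  0 <= L0 -> 0 <= L1 -> (L0 != 0 \/ L1 != 0) -> 0 < w -> 0 < L0 + L1 * w.
Proof.
move=> L0_ge0 L1_ge0 L_neq0 w_gt0; have L1w_ge0 := mulr_ge0 L1_ge0 (ltW w_gt0).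
case: L_neq0 => [L0_neq0 | L1_neq0].
  by rewrite ltr_pwDl // lt_neqAle eq_sym L0_neq0.
by rewrite ltr_wpDl // mulr_gt0 // lt_neqAle eq_sym L1_neq0.
Qed.

Lemma rate_constant_identity (R : realFieldType) (L0 L1 s Ci x : R) :
  0 < Ci -> 0 < L0 + L1 * s / Ci ->
  2^-1 * (L0 + L1 * s / Ci)^-1 * x = Ci * x / (2 * (L0 * Ci + L1 * s)).
Proof.
move=> Ci_gt0 K_gt0; have den_gt0 : 0 < L0 * Ci + L1 * s.
  by have := mulr_gt0 K_gt0 Ci_gt0; rewrite mulrDl divfK ?gt_eqF.
by field; rewrite !gt_eqF.
Qed.

(* The gain n^2 / (2 b) of a normalized step dominates a e^2, where e plays the
   role of delta^(1-xi), n that of the gradient norm and b that of beta: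
   combine beta <= L0 n^2/e^2 + L1 n with the Lojasiewicz bound Ci e <= n. *)
Lemma step_gain_lower_bound (R : realFieldType) (b n e e1 Ci L0 L1 : R) :
  0 < b -> 0 < e -> e <= e1 -> 0 < Ci -> Ci * e <= n ->
  0 <= L1 -> 0 < L0 + L1 * e1 / Ci ->
  b <= L0 * (n ^+ 2 / e ^+ 2) + L1 * n ->
  2^-1 * (L0 + L1 * e1 / Ci)^-1 * e ^+ 2 <= n ^+ 2 / (2 * b).
Proof.
move=> b_gt0 e_gt0 e_le C_gt0 Ce_le L1_ge0 K_gt0 b_le.
set K := L0 + L1 * e1 / Ci in K_gt0 *.
have n_gt0 : 0 < n by apply: lt_le_trans Ce_le; rewrite mulr_gt0.
have e2_gt0 : 0 < e ^+ 2 by rewrite exprn_gt0.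
have e2_le : e ^+ 2 <= e1 * (n / Ci).
  have e_le_nC : e <= n / Ci by rewrite ler_pdivlMr // mulrC.
  by rewrite expr2; apply: ler_pM => //; exact: ltW.
have be2_le : b * e ^+ 2 <= K * n ^+ 2.
  have -> : K * n ^+ 2 = L0 * n ^+ 2 + L1 * n * (e1 * (n / Ci)).
    by rewrite /K; field; rewrite gt_eqF.
  have := ler_wpM2r (ltW e2_gt0) b_le.
  have -> : (L0 * (n ^+ 2 / e ^+ 2) + L1 * n) * e ^+ 2 = L0 * n ^+ 2 + L1 * n * e ^+ 2.
    by field; rewrite gt_eqF.
  move=> /le_trans; apply; rewrite lerD2l; apply: ler_wpM2l => //.
  by rewrite mulr_ge0 // ltW.
rewrite ler_pdivlMr ?mulr_gt0 //.
have -> : 2^-1 / K * e ^+ 2 * (2 * b) = b * e ^+ 2 / K by field; rewrite gt_eqF.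
by rewrite ler_pdivrMr // [n ^+ 2 * K]mulrC.
Qed.

Section Recursions.
Variable R : realType.

(* Tangent line at r = 1 of the convex map r |-> r^(-p), via exp y >= 1 + y
   and ln r <= r - 1. *)
Lemma powRN_tangent (p r : R) : 0 <= p -> 0 < r -> 1 + p * (1 - r) <= r `^ (- p).
Proof.
move=> p_ge0 r_gt0; rewrite /powR gt_eqF //; apply: le_trans (expR_ge1Dx _).
have ln_le : ln r <= r - 1.
  by have := @le_ln1Dx R (r - 1); rewrite [1 + _]addrC subrK; apply; lra.
nra.
Qed.

(* One step of u' <= u - c u^(1+p) raises u^(-p) by at least p c:
   y^(-p) = x^(-p) (y/x)^(-p) >= x^(-p) (1 + p (x - y)/x) >= x^(-p) + p c. *)
Lemma powRN_recursion_step (x y p c : R) :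
  0 < y -> 0 < x -> 0 < p -> 0 <= c -> y <= x - c * x `^ (1 + p) ->
  x `^ (- p) + p * c <= y `^ (- p).
Proof.
move=> y_gt0 x_gt0 p_gt0 c_ge0 y_le.
set X := x `^ (- p).
have X_gt0 : 0 < X by rewrite powR_gt0.
have XxE : X * x `^ (1 + p) = x.
  rewrite -powRD; last by rewrite (gt_eqF x_gt0) implybT.
  by rewrite addrCA addNr addr0 powRr1 // ltW.
have r_gt0 : 0 < y / x by rewrite divr_gt0.
have -> : y = x * (y / x) by rewrite mulrC divfK ?gt_eqF.
rewrite powRM ?(ltW x_gt0) ?(ltW r_gt0) // -/X.
apply: le_trans _ (ler_wpM2l (ltW X_gt0) (powRN_tangent (ltW p_gt0) r_gt0)).
have gain : c * x <= X * (x - y).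
  by rewrite -XxE mulrCA; apply: ler_wpM2l; [exact: ltW | lra].
have -> : X * (1 + p * (1 - y / x)) = X + p * (X * (x - y) / x).
  by field; rewrite gt_eqF.
by rewrite lerD2l ler_pM2l // ler_pdivlMr.
Qed.

Lemma powRN_anti (s t q : R) :
  0 < s -> s <= t -> 0 <= q -> t `^ (- q) <= s `^ (- q).
Proof.
move=> s_gt0 s_le q_ge0; have t_gt0 := lt_le_trans s_gt0 s_le.
rewrite !powRN lef_pV2 ?posrE ?powR_gt0 //.
by apply: ge0_ler_powR => //; rewrite nnegrE ltW.
Qed.

(* Sublinear rate: u_k^(-p) grows at least linearly, hence
   u_k <= (u_0^(-p) + p c k)^(-1/p). *)
Lemma polynomial_rate (u : nat -> R) (p c : R) :
  0 < p -> 0 <= c -> (forall k, 0 < u k) ->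
  (forall k, u k.+1 <= u k - c * u k `^ (1 + p)) ->
  forall k, u k <= (u 0%N `^ (- p) + p * c * k%:R) `^ (- p^-1).
Proof.
move=> p_gt0 c_ge0 u_gt0 u_step.
have inv_growth k : u 0%N `^ (- p) + p * c * k%:R <= u k `^ (- p).
  elim: k => [|k IH]; first by rewrite mulr0 addr0.
  apply: le_trans (powRN_recursion_step (u_gt0 _) (u_gt0 _) p_gt0 c_ge0 (u_step k)).
  by rewrite -natr1 mulrDr mulr1 addrA lerD2r.
move=> k; have B_gt0 : 0 < u 0%N `^ (- p) + p * c * k%:R.
  by rewrite ltr_wpDr ?powR_gt0 // !mulr_ge0 // ltW.
have pinv_ge0 : 0 <= p^-1 by rewrite invr_ge0 ltW.
have := powRN_anti B_gt0 (inv_growth k) pinv_ge0.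
by rewrite -powRrM mulrNN divff ?gt_eqF // powRr1 // ltW.
Qed.

(* Linear rate: u_{k+1} <= (1 - c) u_k <= exp(-c) u_k. *)
Lemma geometric_rate (u : nat -> R) (c : R) :
  (forall k, 0 <= u k) -> (forall k, u k.+1 <= u k - c * u k) ->
  forall k, u k <= expR (- (c * k%:R)) * u 0%N.
Proof.
move=> u_ge0 u_step; elim=> [|k IH]; first by rewrite mulr0 oppr0 expR0 mul1r.
have one_step : u k.+1 <= expR (- c) * u k.
  have := expR_ge1Dx (- c); have := u_ge0 k; have := u_step k; nra.
apply: le_trans one_step _.
rewrite -natr1 mulrDr mulr1 opprD addrC expRD -mulrA.
by apply: ler_wpM2l; first exact: expR_ge0.
Qed.

End Recursions.


Section NormalizedGradientDescent.
Variables (R : realType) (d : nat) (f : 'rV[R]_d -> R) (C beta : 'rV[R]_d -> R).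
Variables (xi L0 L1 : R) (theta : nat -> 'rV[R]_d).

Let delta th := f th - fstar f.
Let Cinf := inf [set C (theta t) | t in [set t : nat | (1 <= t)%N]].

Hypothesis beta_gt0 : forall th, 0 < beta th.
Hypothesis ns_bound : forall th th' : 'rV[R]_d,
  `| f th' - f th - dotv (grad f th) (th' - th) | <= beta th / 2 * norm2 (th' - th) ^+ 2.
Hypothesis gngd_step : forall t, (1 <= t)%N ->
  theta t.+1 = theta t - (beta (theta t))^-1 *: grad f (theta t).
Hypothesis delta_gt0 : forall t, (1 <= t)%N -> 0 < delta (theta t).

Lemma gngd_descent t : (1 <= t)%N ->
  delta (theta t.+1) <= delta (theta t) - norm2 (grad f (theta t)) ^+ 2 / (2 * beta (theta t)).
Proof.
move=> t_ge1; have := ns_gradient_step (beta_gt0 _) (ns_bound _ _) (gngd_step t_ge1).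
by rewrite /delta; lra.
Qed.

Lemma gngd_monotone t : (1 <= t)%N -> delta (theta t.+1) <= delta (theta t).
Proof.
move=> t_ge1; apply: le_trans (gngd_descent t_ge1) _.
by rewrite lerBlDr lerDl divr_ge0 ?sqr_ge0 // mulr_ge0 // ltW.
Qed.

Lemma gngd_le_first k : delta (theta k.+1) <= delta (theta 1%N).
Proof. by elim: k => [//|k IH]; apply: le_trans (gngd_monotone _) IH. Qed.

Hypothesis C_gt0 : forall th, 0 < C th.
Hypothesis xi_le1 : xi <= 1.
Hypothesis lojasiewicz : forall th,
  C th * (`| f th - fstar f | `^ (1 - xi)) <= norm2 (grad f th).
Hypothesis beta_le : forall th, 0 < f th - fstar f ->
  beta th <= L0 * (norm2 (grad f th) ^+ 2 / (f th - fstar f) `^ (2 - 2 * xi))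
             + L1 * norm2 (grad f th).
Hypothesis L1_ge0 : 0 <= L1.
Hypothesis Cinf_gt0 : 0 < Cinf.
Hypothesis K_gt0 : 0 < L0 + L1 * delta (theta 1%N) `^ (1 - xi) / Cinf.

Lemma Cinf_le t : (1 <= t)%N -> Cinf <= C (theta t).
Proof.
move=> t_ge1; apply: ge_inf; last by exists t.
by exists 0 => _ [s _ <-]; exact: ltW.
Qed.

(* Sufficient decrease delta_{t+1} <= delta_t - a delta_t^(2-2xi), t = k+1:
   the descent gain dominates a e^2 with e = delta_t^(1-xi) <= delta_1^(1-xi). *)
Lemma gngd_sufficient_decrease k :
  delta (theta k.+2) <= delta (theta k.+1)
    - 2^-1 * (L0 + L1 * delta (theta 1%N) `^ (1 - xi) / Cinf)^-1
      * delta (theta k.+1) `^ (2 - 2 * xi).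
Proof.
have t_ge1 : (1 <= k.+1)%N by [].
have dt_gt0 := delta_gt0 t_ge1.
set e := delta (theta k.+1) `^ (1 - xi).
have e_gt0 : 0 < e by rewrite powR_gt0.
have e_sqr : delta (theta k.+1) `^ (2 - 2 * xi) = e ^+ 2.
  by rewrite -powR_mulrn ?ltW // -powRrM; congr (_ `^ _); ring.
have e_le : e <= delta (theta 1%N) `^ (1 - xi).
  have d1_gt0 := delta_gt0 (isT : (1 <= 1)%N).
  apply: ge0_ler_powR; rewrite ?nnegrE ?gngd_le_first //.
  - by rewrite subr_ge0.
  - exact: ltW.
  - exact: ltW.
have Ce_le : Cinf * e <= norm2 (grad f (theta k.+1)).
  apply: le_trans (lojasiewicz _); rewrite gtr0_norm //.
  by rewrite ler_pM2r //; exact: Cinf_le.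
have beta_le_t := beta_le dt_gt0; rewrite -/(delta _) e_sqr in beta_le_t.
have := step_gain_lower_bound (beta_gt0 _) e_gt0 e_le Cinf_gt0 Ce_le
  L1_ge0 K_gt0 beta_le_t.
by have := gngd_descent t_ge1; rewrite e_sqr; lra.
Qed.

End NormalizedGradientDescent.

Unset Implicit Arguments.
Theorem theorem1 (R : realType) (d : nat) (f : 'rV[R]_d -> R)
  (C beta : 'rV[R]_d -> R) (xi L0 L1 : R) (theta : nat -> 'rV[R]_d) :
  (forall th, differentiable f th) ->
  has_lbound (range f) ->
  xi <= 1 / 2 ->
  0 <= L0 -> 0 <= L1 -> (L0 != 0 \/ L1 != 0) ->
  NL f C xi ->
  NS f beta ->
  (forall th, 0 < f th - fstar f ->
     beta th <= L0 * (norm2 (grad f th) ^+ 2 / (f th - fstar f) `^ (2 - 2 * xi))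
                + L1 * norm2 (grad f th)) ->
  (forall t, (1 <= t)%N ->
     theta t.+1 = theta t - (beta (theta t))^-1 *: grad f (theta t)) ->
  (forall t, (1 <= t)%N -> 0 < f (theta t) - fstar f) ->
  (forall t, (1 <= t)%N -> grad f (theta t) != 0) ->
  let Cinf := inf [set C (theta t) | t in [set t : nat | (1 <= t)%N]] in
  0 < Cinf ->
  let delta := fun th => f th - fstar f in
  let a := 2^-1 * (L0 + L1 * delta (theta 1%N) `^ (1 - xi) / Cinf)^-1 in
  (forall t, (1 <= t)%N -> delta (theta t.+1) <= delta (theta t)) /\
  (xi < 1 / 2 -> forall t, (1 <= t)%N ->
     delta (theta t) <=
       (delta (theta 1%N) `^ (- (1 - 2 * xi)) + (1 - 2 * xi) * a * (t - 1)%:R)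
         `^ (- (1 - 2 * xi)^-1)) /\
  (xi = 1 / 2 -> forall t, (1 <= t)%N ->
     delta (theta t) <=
       expR (- (Cinf * (t - 1)%:R) / (2 * (L0 * Cinf + L1 * delta (theta 1%N) `^ (1 / 2))))
       * delta (theta 1%N)).
Proof.
move=> _ _ xi_le L0_ge0 L1_ge0 L_neq0 [xi_le1 [C_gt0 lojasiewicz]] [beta_gt0 ns_bound]
  beta_le gngd_step delta_gt0 _ Cinf Cinf_gt0 delta a.
have d1_gt0 : 0 < delta (theta 1%N) := delta_gt0 1%N isT.
have K_gt0 : 0 < L0 + L1 * delta (theta 1%N) `^ (1 - xi) / Cinf.
  by rewrite -mulrA nonneg_comb_gt0 // divr_gt0 ?powR_gt0.
have a_gt0 : 0 < a by rewrite mulr_gt0 ?invr_gt0.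
pose u k := delta (theta k.+1).
have u_gt0 k : 0 < u k := delta_gt0 k.+1 isT.
have u_step k : u k.+1 <= u k - a * u k `^ (2 - 2 * xi).
  exact: (gngd_sufficient_decrease beta_gt0 ns_bound gngd_step delta_gt0 C_gt0 xi_le1
    lojasiewicz beta_le L1_ge0 Cinf_gt0 K_gt0).
split; first exact: gngd_monotone beta_gt0 ns_bound gngd_step.
split=> [xi_lt | xi_eq] [//|k] _; rewrite subSS subn0.
  have p_gt0 : 0 < 1 - 2 * xi by lra.
  apply: (polynomial_rate p_gt0 (ltW a_gt0) u_gt0) => j.
  by rewrite (_ : 1 + (1 - 2 * xi) = 2 - 2 * xi); [exact: u_step | ring].
have u_lin j : u j.+1 <= u j - a * u j.
  have two_xi : 2 - 2 * xi = 1 by rewrite xi_eq; field.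
  by have := u_step j; rewrite two_xi powRr1 // ltW.
apply: le_trans (geometric_rate (fun j => ltW (u_gt0 j)) u_lin k) _.
have half : 1 - 1 / 2 = 1 / 2 :> R by field.
rewrite /a xi_eq half in K_gt0 *.
by rewrite rate_constant_identity // mulNr lexx.
Qed.
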